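(* Let $\mathbf t$ be a hyper-term, $P$ a hyper-assertion and $Q$ a post hyper-assertion, with $\mathrm{pvar}(P)\cap\mathrm{mods}(\mathbf t)=\emptyset$. Then $$\mathrm{proj}(\mathbf t)\wedge\mathrm{wp}\,\mathbf t\,\{\lambda\mathbf r.\ Q(\mathbf r)\Rightarrow P\}\ \vdash\ \big(\mathrm{wp}\,\mathbf t\,\{Q\}\Rightarrow P\big).$$
   Context: Setting. $\mathrm{Val}=\mathbb{Z}$; $\mathrm{PVar}$ is a countably infinite set of program variables; a store is a function $s:\mathrm{PVar}\to\mathrm{Val}$; indices are $\mathrm{Idx}=\mathbb{N}$. Terms of a first-order imperative language are generated by $t ::= v \mid x \mid * \mid t\oplus t \mid \mathtt{skip}\mid x:=t \mid t;t \mid \mathtt{if}\ t\ \mathtt{then}\ t\ \mathtt{else}\ t \mid \mathtt{while}\ t\ \mathtt{do}\ t$, with a nondeterministic big-step semantics $t,s\Downarrow v,s'$ ($t$ run from store $s$ may terminate with return value $v$ and final store $s'$; $*$ returns an arbitrary integer). A hyper-term $\mathbf t$ is a finitely supported partial function from $\mathrm{Idx}$ to terms, with support $\mathrm{supp}(\mathbf t)$; a hyper-store is a total function $\mathbf s:\mathrm{Idx}\to\mathrm{Store}$; a hyper-return-value is a finitely supported partial function $\mathbf v:\mathrm{Idx}\rightharpoonup\mathrm{Val}$. $\mathbf t,\mathbf s\Downarrow\mathbf v,\mathbf s'$ holds iff for every $i\in\mathrm{supp}(\mathbf t)$, $\mathbf t(i),\mathbf s(i)\Downarrow\mathbf v(i),\mathbf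 s'(i)$, and for every $i\notin\mathrm{supp}(\mathbf t)$, $\mathbf s'(i)=\mathbf s(i)$ and $\mathbf v(i)$ is undefined. A hyper-assertion is a predicate on hyper-stores; a post hyper-assertion is an upward-closed map $Q$ from hyper-return-values to hyper-assertions (if $Q(\mathbf v)(\mathbf s)$ and $\mathbf v'$ agrees with $\mathbf v$ on $\mathrm{supp}(\mathbf v)$ then $Q(\mathbf v')(\mathbf s)$). Connectives are pointwise. Entailment $P\vdash R$ means $\forall\mathbf s.\ P(\mathbf s)\Rightarrow R(\mathbf s)$. $\mathrm{wp}\,\mathbf t\,\{Q\}(\mathbf s):\iff\forall\mathbf v,\mathbf s'.\ (\mathbf t,\mathbf s\Downarrow\mathbf v,\mathbf s')\Rightarrow Q(\mathbf v)(\mathbf s')$. Variables. $\mathrm{mods}(t)$ is the set of program variables assigned (occurring on the left of $:=$) in $t$; $\mathrm{mods}(\mathbf t)=\{(x,i)\mid i\in\mathrm{supp}(\mathbf t),\ x\in\mathrm{mods}(\mathbf t(i))\}$. $\mathrm{pvar}(P)=\{(x,i)\in\mathrm{PVar}\times\mathrm{Idx}\mid \exists\mathbf s,v.\ P(\mathbf s)\not\Leftrightarrow P(\mathbf s[i:\mathbf s(i)[x:v]])\}$. Projectability. $\mathrm{proj}(\mathbf t)(\mathbf s):\iff\exists\mathbf v,\mathbf s'.\ \mathbf t,\mathbf s\Downarrow\mathbf v,\mathbf s'$. *)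

From Stdlib Require Import ZArith List.
Import ListNotations.
Open Scope Z_scope.

Definition Val := Z.
Definition PVar := nat.
Definition Store := PVar -> Val.
Definition Idx := nat.

Definition upd (s : Store) (x : PVar) (v : Val) : Store :=
  fun y => if Nat.eqb y x then v else s y.

(* Terms; the binary operator symbol (+) is given by its interpretation. *)
Inductive term : Type :=
| TVal : Val -> term
| TVar : PVar -> term
| TStar : term
| TBin : (Val -> Val -> Val) -> term -> term -> term
| TSkip : term
| TAssign : PVar -> term -> term
| TSeq : term -> term -> term
| TIf : term -> term -> term -> term
| TWhile : term -> term -> term.

(* Conventions: a condition is true iff its value is nonzero; skip and while
   return 0; assignment returns the assigned value; t1;t2 returns the value of t2. *)
Inductive eval : term -> Store -> Val -> Store -> Prop :=
| E_Val : forall v s, eval (TVal v) s v s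
| E_Var : forall x s, eval (TVar x) s (s x) s
| E_Star : forall v s, eval TStar s v s
| E_Bin : forall op t1 t2 s s1 s2 v1 v2,
    eval t1 s v1 s1 -> eval t2 s1 v2 s2 -> eval (TBin op t1 t2) s (op v1 v2) s2
| E_Skip : forall s, eval TSkip s 0 s
| E_Assign : forall x t s v s1,
    eval t s v s1 -> eval (TAssign x t) s v (upd s1 x v)
| E_Seq : forall t1 t2 s s1 s2 v1 v2,
    eval t1 s v1 s1 -> eval t2 s1 v2 s2 -> eval (TSeq t1 t2) s v2 s2
| E_IfT : forall b t1 t2 s s1 vb v s2,
    eval b s vb s1 -> vb <> 0 -> eval t1 s1 v s2 -> eval (TIf b t1 t2) s v s2
| E_IfF : forall b t1 t2 s s1 v s2,
    eval b s 0 s1 -> eval t2 s1 v s2 -> eval (TIf b t1 t2) s v s2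
| E_WhileT : forall b c s s1 vb vc s2 v s3,
    eval b s vb s1 -> vb <> 0 -> eval c s1 vc s2 ->
    eval (TWhile b c) s2 v s3 -> eval (TWhile b c) s v s3
| E_WhileF : forall b c s s1,
    eval b s 0 s1 -> eval (TWhile b c) s 0 s1.

Fixpoint mods (t : term) : list PVar :=
  match t with
  | TVal _ | TVar _ | TStar | TSkip => []
  | TBin _ t1 t2 | TSeq t1 t2 | TWhile t1 t2 => mods t1 ++ mods t2
  | TAssign x t1 => x :: mods t1
  | TIf b t1 t2 => mods b ++ mods t1 ++ mods t2
  end.

Definition fin_supp {A : Type} (f : Idx -> option A) : Prop :=
  exists N : nat, forall i : nat, (N <= i)%nat -> f i = None.

Definition hterm := { f : Idx -> option term | fin_supp f }.
Definition hterm_fun (t : hterm) : Idx -> option term := proj1_sig t.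
Coercion hterm_fun : hterm >-> Funclass.

Definition hstore := Idx -> Store.
Definition hval := Idx -> option Val.

Definition hassn := hstore -> Prop.
Definition post := hval -> hassn.

Definition upward_closed (Q : post) : Prop :=
  forall (v v' : hval), fin_supp v -> fin_supp v' ->
    (forall i a, v i = Some a -> v' i = Some a) ->
    forall s, Q v s -> Q v' s.

Definition heval (t : hterm) (s : hstore) (v : hval) (s' : hstore) : Prop :=
  forall i : Idx,
    match t i with
    | Some ti => exists vi, v i = Some vi /\ eval ti (s i) vi (s' i)
    | None => s' i = s i /\ v i = None
    end.

Definition hmods (t : hterm) (x : PVar) (i : Idx) : Prop :=
  exists ti, t i = Some ti /\ In x (mods ti).

Definition hupd (s : hstore) (i : Idx) (x : PVar) (v : Val) : hstore :=
  fun j => if Nat.eqb j i then upd (s i) x v else s j.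

Definition pvar (P : hassn) (x : PVar) (i : Idx) : Prop :=
  exists (s : hstore) (v : Val), ~ (P s <-> P (hupd s i x v)).

Definition wp (t : hterm) (Q : post) : hassn :=
  fun s => forall v s', heval t s v s' -> Q v s'.

Definition proj (t : hterm) : hassn :=
  fun s => exists v s', heval t s v s'.

Definition entails (P R : hassn) : Prop := forall s, P s -> R s.

From Stdlib Require Import List Arith Lia FunctionalExtensionality Classical.
Import ListNotations.

(* Take any run of [t] from [s] to [s']; it exists by projectability.  The run
   satisfies [Q], so the weakest precondition of [Q => P] yields [P s'].  A run
   changes only variables in [mods t], of which there are finitely many because
   [t] has finite support, and [P] depends on none of them; changing them back
   one at a time turns [P s'] into [P s]. *)

Lemma eval_frame t s v s' :
  eval t s v s' -> forall y, ~ In y (mods t) -> s' y = s y.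
Proof.
  induction 1; intros y Hy; simpl in Hy; rewrite ?in_app_iff in Hy;
    repeat match goal with
           | IH : forall y, ~ In y _ -> _ |- _ => rewrite IH by tauto; clear IH
           end; auto.
  - unfold upd; destruct (Nat.eqb_spec y x) as [-> | _]; [tauto|].
    apply IHeval; tauto.
  - rewrite IHeval3, IHeval2, IHeval1; simpl; rewrite ?in_app_iff; tauto.
Qed.

Lemma heval_frame t s v s' :
  heval t s v s' -> forall i y, ~ hmods t y i -> s' i y = s i y.
Proof.
  intros Hev i y Hy; specialize (Hev i).
  destruct (t i) as [ti|] eqn:Eti.
  - destruct Hev as [vi [_ Hi]]; apply (eval_frame _ _ _ _ Hi).
    intro Hin; apply Hy; now exists ti.
  - now destruct Hev as [-> _].
Qed.

Lemma hmods_finite (t : hterm) :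
  exists D : list (Idx * PVar), forall i y, In (i, y) D <-> hmods t y i.
Proof.
  destruct t as [f [N HN]].
  exists (flat_map (fun i => match f i with
                             | Some ti => map (pair i) (mods ti)
                             | None => []
                             end) (seq 0 N)).
  intros i y; unfold hmods, hterm_fun; simpl; rewrite in_flat_map; split.
  - intros [j [_ Hj]]; destruct (f j) as [tj|] eqn:Etj; [|destruct Hj].
    apply in_map_iff in Hj as [z [Ezy Hz]]; injection Ezy as -> ->.
    now exists tj.
  - intros [ti [Eti Hy]]; exists i; split.
    + apply in_seq; split; [lia|].
      destruct (Nat.lt_ge_cases i N) as [|HiN]; [lia|].
      now rewrite HN in Eti.
    + rewrite Eti; now apply in_map.
Qed.

Lemma not_pvar_hupd P x i s v :
  ~ pvar P x i -> (P s <-> P (hupd s i x v)).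
Proof.
  intro HP; apply NNPP; intro Hc; apply HP; now exists s, v.
Qed.

Lemma hassn_iff_agree_off (P : hassn) (D : list (Idx * PVar)) :
  (forall i y, In (i, y) D -> ~ pvar P y i) ->
  forall s s', (forall i y, ~ In (i, y) D -> s' i y = s i y) -> (P s <-> P s').
Proof.
  induction D as [|[i x] D IH]; intros Hindep s s' Hagree.
  - replace s' with s; [tauto|].
    extensionality j; extensionality y; symmetry; now apply Hagree.
  - rewrite (not_pvar_hupd P x i s (s' i x)) by (apply Hindep; now left).
    apply IH; [intros; apply Hindep; now right|].
    intros j y Hjy; unfold hupd, upd.
    destruct (Nat.eqb_spec j i) as [-> | Hji].
    + destruct (Nat.eqb_spec y x) as [-> | Hyx]; [reflexivity|].
      apply Hagree; intros [E | H]; [congruence | tauto].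
    + apply Hagree; intros [E | H]; [congruence | tauto].
Qed.

Theorem mainTheorem4 (t : hterm) (P : hassn) (Q : post) :
  upward_closed Q ->
  (forall x i, pvar P x i -> hmods t x i -> False) ->
  entails
    (fun s => proj t s /\ wp t (fun r s' => Q r s' -> P s') s)
    (fun s => wp t Q s -> P s).
Proof.
  intros _ Hdisj s [[v [s' Hev]] Hwp] HQ.
  assert (HPs' : P s') by apply (Hwp v s' Hev), HQ, Hev.
  destruct (hmods_finite t) as [D HD].
  apply (hassn_iff_agree_off P D) with (s' := s'); [| |exact HPs'].
  - intros i y Hin Hp; apply (Hdisj y i Hp), HD, Hin.
  - intros i y Hy; apply (heval_frame t s v s' Hev); now rewrite <- HD.
Qed.
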